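(* Let $u=s_{i_1}\cdots s_{i_l}$ and $v=s_{j_1}\cdots s_{j_m}$ be reduced words for glides in $\hat S_n$ such that $s_{j_1}\cdots s_{j_m}s_{i_1}\cdots s_{i_l}$ is reduced. In the wiring diagram of $v|u$, write $i\triangleleft j$ if wires $i$ and $j$ cross with $j$ the upper wire of the crossing. Then there exist real numbers $\alpha_1,\dots,\alpha_n$ such that $\alpha_i<\alpha_j$ whenever $i\triangleleft j$.
   Context: $\hat S_n$ is the affine symmetric group with generators $s_0,\dots,s_{n-1}$ (indices mod $n$) and relations $s_i^2=1$, $s_is_js_i=s_js_is_j$ if $i-j\equiv\pm1$, $s_is_j=s_js_i$ if $i-j\not\equiv0,\pm1\pmod n$; $\phi:\hat S_n\to S_n$ sends $s_i\mapsto(i\ i+1)$ ($1\le i\le n-1$), $s_0\mapsto(1\ n)$; a glide of offset $k\in\{0,\dots,n-1\}$ is an element $g$ with $\phi(g)(j)\equiv j+k\pmod n$ for all $j$. A word is drawn as a wiring diagram left to right on a cylinder with $n$ wires in positions $1,\dots,n$ (mod $n$); a letter $s_i$ is a crossing of the wires in positions $i$ and $i+1$ ($s_0$: positions $n$ and $1$). The upper wire of a crossing $s_i$ is the one passing from position $i+1$ to position $i$ (for $s_0$: from position $1$ to position $n$). In the diagram of $v|u$ (the word $vu$ with a cut between $v$ and $u$), wire number $i$ is the wire occupying position $i$ at the cut. *)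

From Stdlib Require Import Relations Reals.
From mathcomp Require Import all_boot.

Set Implicit Arguments.
Unset Strict Implicit.
Unset Printing Implicit Defensive.

(* Conventions: a generator s_i (0 <= i <= n-1) is the letter i : 'I_n.
   Positions 1..n on the cylinder are encoded by ordinals modulo n:
   position p is the ordinal p %% n (so position n is ordinal 0).
   Then s_i crosses positions i and i+1 (mod n), i.e. ordinals i and ordS i
   (this includes s_0, crossing positions n and 1). *)

Section Affine.
Variable n : nat.

Definition adjacent (a b : 'I_n) : bool := (b == ordS a) || (a == ordS b).

Inductive cox_step : seq 'I_n -> seq 'I_n -> Prop :=
| cs_sq (x y : seq 'I_n) (a : 'I_n) :
    cox_step (x ++ [:: a; a] ++ y) (x ++ y)
| cs_braid (x y : seq 'I_n) (a b : 'I_n) :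
    adjacent a b -> cox_step (x ++ [:: a; b; a] ++ y) (x ++ [:: b; a; b] ++ y)
| cs_comm (x y : seq 'I_n) (a b : 'I_n) :
    a != b -> ~~ adjacent a b -> cox_step (x ++ [:: a; b] ++ y) (x ++ [:: b; a] ++ y).

Definition word_eq : seq 'I_n -> seq 'I_n -> Prop :=
  clos_refl_sym_trans _ cox_step.

Definition reduced (w : seq 'I_n) : Prop :=
  forall w', word_eq w w' -> size w <= size w'.

Definition swp (a : 'I_n) (p : 'I_n) : 'I_n :=
  if p == a then ordS a else if p == ordS a then a else p.

Definition phi (w : seq 'I_n) : 'I_n -> 'I_n :=
  foldr (fun a f => swp a \o f) (fun p => p) w.

Definition is_glide (w : seq 'I_n) : Prop :=
  exists k : 'I_n, forall j : 'I_n, val (phi w j) = (val j + val k) %% n.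

(* state ws p = the wire occupying position p after crossing the letters of ws
   in order, starting from the configuration where the wire at position p is p. *)
Definition wstate (ws : seq 'I_n) : 'I_n -> 'I_n :=
  foldl (fun f a => f \o swp a) (fun p => p) ws.

(* In the wiring diagram of v|u (wire i = wire at position i at the cut):
   tri u v i j  <->  wires i and j cross, j being the upper wire (the one going
   from position a+1 to position a at a crossing s_a). *)
Definition tri (u v : seq 'I_n) (i j : 'I_n) : Prop :=
  (exists (x y : seq 'I_n) (a : 'I_n),
      u = x ++ a :: y /\ wstate x a = i /\ wstate x (ordS a) = j)
  \/
  (exists (x y : seq 'I_n) (a : 'I_n),
      v = x ++ a :: y /\ wstate (rev (a :: y)) a = i
                      /\ wstate (rev (a :: y)) (ordS a) = j).

End Affine.

From Stdlib Require Import Relations Reals ZArith Lia.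
From mathcomp Require Import all_boot.

(* Realise \hat S_n as the n-periodic bijections of Z, s_a swapping p and p + 1
   whenever p = a (mod n); a word acts as the composite of its letters, and the
   wire occupying position i at the cut of v|u is the residue class of i.  For a
   glide g the displacement g(P) - P is constant modulo n, hence
   alpha_i := v(i) - u^-1(i) only depends on i mod n.
   By the exchange property, every letter of a reduced word is an ascent of the
   prefix before it; for the reduced product v u this says moreover that no
   inversion of v is an inversion of u^-1.  Now let two wires cross in u, lifted
   to points I < J of Z with J the upper wire.  Then u^-1 inverts I and J; moving J by a multiple of n into
   (I, I + n), v cannot invert the pair, and as v is a glide, v(I) < v(J) improves
   to v(I) - I <= v(J) - J.  Hence alpha_I < alpha_J.  A crossing of v is a
   crossing of rev v in the reversed problem (rev v, rev u), where alpha changes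
   sign. *)

Set Implicit Arguments.
Unset Strict Implicit.
Unset Printing Implicit Defensive.

Section AffinePermutations.
Variable n : nat.
Hypothesis n_ge3 : (3 <= n)%N.

Local Open Scope Z_scope.
Local Notation nZ := (Z.of_nat n).
Implicit Types (a b : 'I_n) (w : seq 'I_n).

Ltac case_eqb := repeat match goal with
  | |- context[(?x =? ?y)] => destruct (Z.eqb_spec x y)
  | H : context[(?x =? ?y)] |- _ => destruct (Z.eqb_spec x y)
  end.

Lemma nZ_ge3 : 3 <= nZ.
Proof. by move/leP: n_ge3; lia. Qed.

Lemma nZ_neq0 : nZ <> 0.
Proof. by have := nZ_ge3; lia. Qed.

Definition zord (a : 'I_n) : Z := Z.of_nat a.

Lemma zord_range a : 0 <= zord a < nZ.
Proof. by have /ltP := ltn_ord a; rewrite /zord; lia. Qed.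

Lemma zord_inj : injective zord.
Proof. by move=> a b; rewrite /zord => e; apply/val_inj/Nat2Z.inj. Qed.

Definition rsucc (r : Z) : Z := if r + 1 =? nZ then 0 else r + 1.

Lemma zord_ordS a : zord (ordS a) = rsucc (zord a).
Proof.
have := zord_range a; rewrite /zord /rsucc /=.
case: (ltngtP a.+1 n) => h.
- by rewrite modn_small //; move/ltP: h; case_eqb; lia.
- by have /ltP := ltn_ord a; move/ltP: h; lia.
- by rewrite h modnn; case_eqb; lia.
Qed.

Lemma rsucc_inj r s : 0 <= r < nZ -> 0 <= s < nZ -> rsucc r = rsucc s -> r = s.
Proof. by have := nZ_ge3; rewrite /rsucc; case_eqb; lia. Qed.

Lemma rsucc_neq r : 0 <= r < nZ -> rsucc r <> r.
Proof. by have := nZ_ge3; rewrite /rsucc; case_eqb; lia. Qed.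

Lemma mod_range p : 0 <= p mod nZ < nZ.
Proof. by apply: Z.mod_pos_bound; have := nZ_ge3; lia. Qed.

Lemma mod_add_period p k : (p + k * nZ) mod nZ = p mod nZ.
Proof. exact: Z.mod_add nZ_neq0. Qed.

Lemma mod_succ p : (p + 1) mod nZ = rsucc (p mod nZ).
Proof.
rewrite -Z.add_mod_idemp_l; last exact: nZ_neq0.
have := mod_range p; rewrite /rsucc; case_eqb => H.
- by rewrite e Z.mod_same //; exact: nZ_neq0.
- by rewrite Z.mod_small //; lia.
Qed.

Lemma mod_pred p : (p - 1) mod nZ = if p mod nZ =? 0 then nZ - 1 else p mod nZ - 1.
Proof.
have -> : p - 1 = (p mod nZ - 1) + (p / nZ) * nZ.
  by have := Z.div_mod p nZ nZ_neq0; lia.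
rewrite mod_add_period; have := mod_range p; case_eqb => H.
- have -> : p mod nZ - 1 = (nZ - 1) + (-1) * nZ by lia.
  by rewrite mod_add_period Z.mod_small; lia.
- by rewrite Z.mod_small; lia.
Qed.

Lemma eqmod_period x p : x mod nZ = p mod nZ -> x = p + (x / nZ - p / nZ) * nZ.
Proof. by have := Z.div_mod x nZ nZ_neq0; have := Z.div_mod p nZ nZ_neq0; nia. Qed.

Lemma le_of_eqmod x y : x mod nZ = y mod nZ -> x < y + nZ -> x <= y.
Proof.
move/eqmod_period => ->; set k := _ - _ => lt.
suff : k <= 0 by have := nZ_ge3; nia.
by have := nZ_ge3; nia.
Qed.

Lemma mod_ordS a x : x mod nZ = zord a -> (x + 1) mod nZ = zord (ordS a).
Proof. by move=> h; rewrite mod_succ h zord_ordS. Qed.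

Lemma ordS_of_mod a b x : x mod nZ = zord a -> (x + 1) mod nZ = zord b -> b = ordS a.
Proof. by move=> ha hb; apply: zord_inj; rewrite -hb; exact: mod_ordS. Qed.

Lemma mod_succ_inj x y : (x + 1) mod nZ = (y + 1) mod nZ -> x mod nZ = y mod nZ.
Proof. by rewrite !mod_succ; apply: rsucc_inj; exact: mod_range. Qed.

Lemma mod_pred_ordS a x : x mod nZ = zord (ordS a) -> (x - 1) mod nZ = zord a.
Proof.
rewrite zord_ordS; have -> : x = x - 1 + 1 by lia.
rewrite mod_succ Z.add_simpl_r; apply: rsucc_inj; [exact: mod_range|exact: zord_range].
Qed.

Lemma mod_add_neq x d : 0 < d < nZ -> (x + d) mod nZ <> x mod nZ.
Proof. by move=> hd /eqmod_period; set k := (_ - _); case: (Z.le_gt_cases k 0); nia. Qed.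

Lemma mod_sub_neq x d : 0 < d < nZ -> (x - d) mod nZ <> x mod nZ.
Proof. by move=> hd e; have := mod_add_neq (x := x - d) hd; rewrite Z.sub_add e. Qed.

(** * The affine symmetric group acting on Z *)

(* s_A moves a point of residue r by [disp A r], onto residue [rswap A r]: identities
   between products of reflections reduce to finitely many residue cases. *)
Definition disp (A r : Z) : Z := if r =? A then 1 else if r =? rsucc A then -1 else 0.
Definition rswap (A r : Z) : Z := if r =? A then rsucc A else if r =? rsucc A then A else r.

Definition aref (a : 'I_n) (p : Z) : Z := p + disp (zord a) (p mod nZ).

Lemma aref_mod a p : aref a p mod nZ = rswap (zord a) (p mod nZ).
Proof.
have := zord_range a; have := mod_range p; rewrite /aref /disp /rswap => Hp HA.
case: (Z.eqb_spec (p mod nZ) (zord a)) => [h1|_]; first by rewrite mod_succ h1.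
case: (Z.eqb_spec (p mod nZ) (rsucc (zord a))) => [h2|_]; last by rewrite Z.add_0_r.
have -> : p + -1 = p - 1 by lia.
by rewrite mod_pred h2; move: h2; rewrite /rsucc; case_eqb; lia.
Qed.

Lemma aref2 a b p : aref b (aref a p) =
  p + disp (zord a) (p mod nZ) + disp (zord b) (rswap (zord a) (p mod nZ)).
Proof. by rewrite {1}/aref aref_mod /aref. Qed.

Lemma aref3 a b c p : aref c (aref b (aref a p)) =
  p + disp (zord a) (p mod nZ) + disp (zord b) (rswap (zord a) (p mod nZ))
    + disp (zord c) (rswap (zord b) (rswap (zord a) (p mod nZ))).
Proof. by rewrite {1}/aref !aref_mod aref2. Qed.

Lemma aref_invol a p : aref a (aref a p) = p.
Proof.
rewrite aref2; have := zord_range a; have := mod_range p; have := nZ_ge3.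
rewrite /disp /rswap /rsucc; case_eqb; lia.
Qed.

Lemma aref_period a p k : aref a (p + k * nZ) = aref a p + k * nZ.
Proof. by rewrite /aref mod_add_period; lia. Qed.

Lemma aref_at a p : p mod nZ = zord a -> aref a p = p + 1 /\ aref a (p + 1) = p.
Proof.
move=> h; rewrite /aref mod_succ h /disp.
have := zord_range a; have := nZ_ge3; rewrite /rsucc; case_eqb; lia.
Qed.

Lemma aref_fix a x : x mod nZ <> zord a -> (x - 1) mod nZ <> zord a -> aref a x = x.
Proof.
move=> h1 h2; have h3 : x mod nZ <> rsucc (zord a).
  by rewrite -zord_ordS => /mod_pred_ordS.
by rewrite /aref /disp; case_eqb; lia.
Qed.

Lemma aref_far a p x : p mod nZ = zord a -> x = p - 1 \/ x = p + 2 -> aref a x = x.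
Proof.
have := nZ_ge3 => ? ha hx; apply: aref_fix; rewrite -ha; case: hx => ->.
- by apply: mod_sub_neq; lia.
- by apply: mod_add_neq; lia.
- by rewrite -Z.sub_add_distr; apply: mod_sub_neq; lia.
- by rewrite -Z.add_sub_assoc; apply: mod_add_neq; lia.
Qed.

Lemma aref_lt a p q : p < q -> aref a p < aref a q \/ (p mod nZ = zord a /\ q = p + 1).
Proof.
move=> lt; rewrite /aref.
have := mod_range p; have := zord_range a; have := nZ_ge3.
case: (Z.lt_ge_cases (p + 2) q) => h; first by rewrite /disp; case_eqb; lia.
have [->|->] : q = p + 1 \/ q = p + 1 + 1 by lia.
- by rewrite mod_succ /disp /rsucc; case_eqb; lia.
- by rewrite !mod_succ /disp /rsucc; case_eqb; lia.
Qed.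

Lemma aref_comm a b p : a != b -> ~~ adjacent a b -> aref a (aref b p) = aref b (aref a p).
Proof.
move=> /eqP nab; rewrite /adjacent negb_or => /andP [/eqP h1 /eqP h2].
have e1 : zord a <> zord b by move/zord_inj.
have e2 : zord b <> rsucc (zord a) by rewrite -zord_ordS => /zord_inj.
have e3 : zord a <> rsucc (zord b) by rewrite -zord_ordS => /zord_inj.
rewrite !aref2.
have := zord_range a; have := zord_range b; have := mod_range p; have := nZ_ge3.
move: e1 e2 e3; rewrite /disp /rswap /rsucc; case_eqb; lia.
Qed.

Lemma aref_braid_ordS a p :
  aref a (aref (ordS a) (aref a p)) = aref (ordS a) (aref a (aref (ordS a) p)).
Proof.
rewrite !aref3 zord_ordS.
have := zord_range a; have := mod_range p; have := nZ_ge3.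
rewrite /disp /rswap /rsucc; case_eqb; lia.
Qed.

Lemma aref_braid a b p : adjacent a b -> aref a (aref b (aref a p)) = aref b (aref a (aref b p)).
Proof. by case/orP => /eqP ->; rewrite aref_braid_ordS. Qed.

Definition wact (w : seq 'I_n) (p : Z) : Z := foldr aref p w.

Lemma wact_cat w1 w2 p : wact (w1 ++ w2) p = wact w1 (wact w2 p).
Proof. exact: foldr_cat. Qed.

Lemma wact_rcons w a p : wact (rcons w a) p = wact w (aref a p).
Proof. exact: foldr_rcons. Qed.

Lemma wact_period w p k : wact w (p + k * nZ) = wact w p + k * nZ.
Proof. by elim: w => [|a w IH] //=; rewrite IH aref_period. Qed.

Lemma wact_revK w p : wact (rev w) (wact w p) = p.
Proof. by elim: w p => [|a w IH] p //=; rewrite rev_cons wact_rcons aref_invol IH. Qed.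

Lemma wact_Krev w p : wact w (wact (rev w) p) = p.
Proof. by rewrite -{1}(revK w) wact_revK. Qed.

Lemma wact_inj w : injective (wact w).
Proof. exact: can_inj (wact_revK w). Qed.

Lemma wact_step w w' : cox_step w w' -> wact w =1 wact w'.
Proof.
case=> [x y a|x y a b H|x y a b H1 H2] p; rewrite !wact_cat /=.
- by rewrite aref_invol.
- by rewrite aref_braid.
- by rewrite aref_comm.
Qed.

Lemma wact_word_eq w w' : word_eq w w' -> wact w =1 wact w'.
Proof.
elim=> [x y /wact_step //|//|x y _ IH p|x y z _ IH1 _ IH2 p].
- by rewrite IH.
- by rewrite IH1 IH2.
Qed.

Lemma cox_step_cat (x y : seq 'I_n) w w' : cox_step w w' -> cox_step (x ++ w ++ y) (x ++ w' ++ y).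
Proof.
case=> [x0 y0 a|x0 y0 a b H|x0 y0 a b H1 H2].
- by have := cs_sq (x ++ x0) (y0 ++ y) a; rewrite -!catA.
- by have := cs_braid (x ++ x0) (y0 ++ y) H; rewrite -!catA.
- by have := cs_comm (x ++ x0) (y0 ++ y) H1 H2; rewrite -!catA.
Qed.

Lemma word_eq_lift (f : seq 'I_n -> seq 'I_n) :
  (forall w w', cox_step w w' -> cox_step (f w) (f w')) ->
  forall w w', word_eq w w' -> word_eq (f w) (f w').
Proof.
move=> hf w w'; elim=> [a b /hf|a|a b _|a b c _ IH1 _ IH2].
- exact: rst_step.
- exact: rst_refl.
- exact: rst_sym.
- exact: rst_trans IH1 IH2.
Qed.

Lemma word_eq_rcons w w' a : word_eq w w' -> word_eq (rcons w a) (rcons w' a).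
Proof.
apply: (word_eq_lift (f := rcons^~ a)) => {}w {}w' /(cox_step_cat [::] [:: a]).
by rewrite /= !cats1.
Qed.

Lemma cox_step_rev w w' : cox_step w w' -> cox_step (rev w) (rev w').
Proof.
case=> [x y a|x y a b H|x y a b H1 H2]; rewrite !rev_cat -!catA.
- exact: cs_sq.
- exact: cs_braid.
- by apply: cs_comm; rewrite 1?eq_sym // /adjacent orbC.
Qed.

Lemma reduced_rev w : reduced w -> reduced (rev w).
Proof.
by move=> rw w' /(word_eq_lift cox_step_rev); rewrite revK size_rev => /rw; rewrite size_rev.
Qed.

Lemma reduced_rcons w a : reduced (rcons w a) -> reduced w.
Proof. by move=> rw w' /(word_eq_rcons a) /rw; rewrite !size_rcons. Qed.

Lemma aref_mod_zord a q P : P mod nZ = zord q -> aref a P mod nZ = zord (swp a q).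
Proof.
move=> hP; rewrite aref_mod hP /swp /rswap.
have HA := zord_range a; have := rsucc_neq HA.
case: (q =P a) => [->|/eqP nqa]; first by rewrite Z.eqb_refl zord_ordS.
case: (q =P ordS a) => [->|/eqP nqa1]; first by rewrite zord_ordS; case_eqb; lia.
have e1 : zord q <> zord a by move/zord_inj/eqP; rewrite (negPf nqa).
have e2 : zord q <> rsucc (zord a) by rewrite -zord_ordS => /zord_inj/eqP; rewrite (negPf nqa1).
by case_eqb; lia.
Qed.

Lemma zord_phi w q P : P mod nZ = zord q -> zord (phi w q) = wact w P mod nZ.
Proof. by elim: w => [|a w IH] //= hP; rewrite (aref_mod_zord a (esym (IH hP))). Qed.

Lemma wstate_rcons w a q : wstate (rcons w a) q = wstate w (swp a q).
Proof. by rewrite /wstate foldl_rcons. Qed.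

Lemma zord_wstate w q P : P mod nZ = zord q -> zord (wstate w q) = wact w P mod nZ.
Proof.
elim/last_ind: w q P => [|w a IH] q P hP //.
by rewrite wstate_rcons wact_rcons -(IH _ _ (aref_mod_zord a hP)).
Qed.

Lemma zmod_ord_subproof P : (Z.to_nat (P mod nZ) < n)%N.
Proof. by apply/ltP; have := mod_range P; lia. Qed.

Definition zmod_ord P : 'I_n := Ordinal (zmod_ord_subproof P).

Lemma zord_zmod_ord P : zord (zmod_ord P) = P mod nZ.
Proof. by rewrite /zord /=; have := mod_range P; lia. Qed.

Lemma zmod_ord_zord P a : P mod nZ = zord a -> zmod_ord P = a.
Proof. by move=> h; apply: zord_inj; rewrite zord_zmod_ord. Qed.

Lemma Z_of_nat_modn m : Z.of_nat (m %% n) = Z.of_nat m mod nZ.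
Proof.
apply: (Z.mod_unique _ _ (Z.of_nat (m %/ n))).
  have /ltP : (m %% n < n)%N by rewrite ltn_mod; apply: leq_trans n_ge3.
  by left; lia.
by rewrite {1}(divn_eq m n) -plusE -multE; lia.
Qed.

Definition mod_translation (f : Z -> Z) : Prop :=
  exists K, forall P, exists t, f P - P = K + t * nZ.

Lemma glide_mod_translation w : is_glide w -> mod_translation (wact w).
Proof.
case=> k hk; exists (zord k) => P.
have := zord_phi w (esym (zord_zmod_ord P)).
rewrite {1}/zord hk Z_of_nat_modn -plusE Nat2Z.inj_add -/(zord _) -/(zord k) zord_zmod_ord.
rewrite Z.add_mod_idemp_l; last exact: nZ_neq0.
by move/esym/eqmod_period; set t := (_ - _) => ->; exists t; lia.
Qed.

Lemma mod_translation_rev w : mod_translation (wact w) -> mod_translation (wact (rev w)).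
Proof.
case=> K hK; exists (- K) => P; have [t ht] := hK (wact (rev w) P).
by exists (- t); move: ht; rewrite wact_Krev; lia.
Qed.

(** * Ascending words and the exchange property *)

(* Each letter of w is an ascent of c composed with the preceding letters; for
   c = id this is reducedness counted by inversions. *)
Fixpoint ascending (c : Z -> Z) w : Prop :=
  if w is a :: w' then
    (forall p, p mod nZ = zord a -> c p < c (p + 1)) /\ ascending (c \o aref a) w'
  else True.

Lemma ascending_cat c w1 w2 :
  ascending c (w1 ++ w2) <-> ascending c w1 /\ ascending (c \o wact w1) w2.
Proof. by elim: w1 c => [|a w1 IH] c /=; [tauto|rewrite IH; tauto]. Qed.

Lemma ascending_rcons c w a : ascending c (rcons w a) <->
  ascending c w /\ (forall p, p mod nZ = zord a -> c (wact w p) < c (wact w (p + 1))).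
Proof. by rewrite -cats1 ascending_cat /=; tauto. Qed.

Lemma ascending_rev_lt c w p q :
  ascending c w -> p < q -> c q < c p -> wact (rev w) p < wact (rev w) q.
Proof.
elim: w c p q => [|a w IH] c p q //= [asc_a asc_w] pq cqp.
rewrite rev_cons !wact_rcons; apply: (IH _ _ _ asc_w).
- by case: (aref_lt a pq) => // [[hp qE]]; move: cqp; rewrite qE; have := asc_a p hp; lia.
- by rewrite /= !aref_invol.
Qed.

Lemma ascent_mod w p x :
  x mod nZ = p mod nZ -> wact w p < wact w (p + 1) -> wact w x < wact w (x + 1).
Proof.
move=> /eqmod_period ->; set k := (_ - _) => h.
by rewrite -Z.add_assoc (Z.add_comm (k * nZ)) Z.add_assoc !wact_period; lia.
Qed.

Lemma wact_word_eq_rcons w Q d x : word_eq w (rcons Q d) -> wact Q x = wact w (aref d x).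
Proof. by move=> h; rewrite (wact_word_eq h) wact_rcons aref_invol. Qed.

Lemma word_eq_braid_rcons Q a b : adjacent a b ->
  word_eq (rcons (rcons (rcons Q a) b) a) (rcons (rcons (rcons Q b) a) b).
Proof. by move=> h; apply: rst_step; rewrite -!cats1 -!catA /=; exact: (cs_braid Q [::] h). Qed.

Lemma word_eq_comm_rcons Q a b : a != b -> ~~ adjacent a b ->
  word_eq (rcons (rcons Q a) b) (rcons (rcons Q b) a).
Proof.
by move=> h1 h2; apply: rst_step; rewrite -!cats1 -!catA /=; exact: (cs_comm Q [::] h1 h2).
Qed.

Lemma word_eq_sq_rcons Q a : word_eq (rcons (rcons Q a) a) Q.
Proof.
apply: rst_step; rewrite -!cats1 -catA /=.
by have := cs_sq Q [::] a; rewrite !cats0.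
Qed.

Definition ends_in w p : Prop :=
  exists2 Q, word_eq w (rcons Q (zmod_ord p)) & ascending id Q /\ (size Q).+1 = size w.

Definition descent_exchange w : Prop :=
  ascending id w -> forall p, wact w (p + 1) < wact w p -> ends_in w p.

Section ExchangeStep.
Variables (w : seq 'I_n) (e : 'I_n) (p : Z).
Hypothesis asc_w : ascending id w.
Hypothesis asc_e : forall x, x mod nZ = zord e -> wact w x < wact w (x + 1).
Hypothesis desc : wact w (aref e (p + 1)) < wact w (aref e p).
Hypothesis IH : forall w', (size w' <= size w)%N -> descent_exchange w'.

Lemma ends_in_last : p mod nZ = zord e -> ends_in (rcons w e) p.
Proof.
by rewrite /ends_in => /zmod_ord_zord ->; exists w; [exact: rst_refl|rewrite size_rcons].
Qed.

Lemma ends_in_braid_up : (p + 1) mod nZ = zord e -> ends_in (rcons w e) p.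
Proof.
move=> he; set d := zmod_ord p; have hd : p mod nZ = zord d by rewrite zord_zmod_ord.
have [e1 e2] := aref_at he; have e0 : aref e p = p by apply: (aref_far he); lia.
have [d0 d1] := aref_at hd.
have d2 : aref d (p + 1 + 1) = p + 1 + 1 by apply: (aref_far hd); lia.
have up := asc_e he; have := desc; rewrite e0 e1 => dn.
have [Q1 wQ1 [aQ1 sQ1]] := IH (leqnn _) asc_w (ltac:(lia) : wact w (p + 1) < wact w p).
have c1 x : wact Q1 x = wact w (aref d x) := wact_word_eq_rcons x wQ1.
have [Q2 wQ2 [aQ2 sQ2]] : ends_in Q1 (p + 1).
  by apply: IH aQ1 _ _; [rewrite -sQ1|rewrite !c1 d1 d2; lia].
rewrite (zmod_ord_zord he) in wQ2.
have c2 x : wact Q2 x = wact Q1 (aref e x) := wact_word_eq_rcons x wQ2.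
exists (rcons (rcons Q2 d) e); last split.
- apply: rst_trans (word_eq_rcons e wQ1) _.
  apply: rst_trans (word_eq_rcons e (word_eq_rcons d wQ2)) _.
  by apply: word_eq_braid_rcons; rewrite /adjacent (ordS_of_mod hd he) eqxx orbT.
- apply/ascending_rcons; split; first (apply/ascending_rcons; split => // x).
  + move=> hx; apply: (ascent_mod (p := p)); first by rewrite hx hd.
    by rewrite !c2 !c1 e0 e1 d0 d2.
  + move=> x hx; apply: (ascent_mod (p := p + 1)); first by rewrite hx he.
    by rewrite !wact_rcons d1 d2 !c2 e0 e2 !c1 d0 d1; lia.
- by rewrite !size_rcons -sQ1 -sQ2.
Qed.

Lemma ends_in_braid_down : (p - 1) mod nZ = zord e -> ends_in (rcons w e) p.
Proof.
move=> he; set d := zmod_ord p; have hd : p mod nZ = zord d by rewrite zord_zmod_ord.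
have [] := aref_at he; rewrite Z.sub_add => e0 e1.
have e2 : aref e (p + 1) = p + 1 by apply: (aref_far he); lia.
have [d0 d1] := aref_at hd.
have dm : aref d (p - 1) = p - 1 by apply: (aref_far hd); lia.
have := asc_e he; have := desc; rewrite e1 e2 Z.sub_add => dn up.
have [Q1 wQ1 [aQ1 sQ1]] := IH (leqnn _) asc_w (ltac:(lia) : wact w (p + 1) < wact w p).
have c1 x : wact Q1 x = wact w (aref d x) := wact_word_eq_rcons x wQ1.
have [Q2 wQ2 [aQ2 sQ2]] : ends_in Q1 (p - 1).
  by apply: IH aQ1 _ _; [rewrite -sQ1|rewrite Z.sub_add !c1 d0 dm; lia].
rewrite (zmod_ord_zord he) in wQ2.
have c2 x : wact Q2 x = wact Q1 (aref e x) := wact_word_eq_rcons x wQ2.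
exists (rcons (rcons Q2 d) e); last split.
- apply: rst_trans (word_eq_rcons e wQ1) _.
  apply: rst_trans (word_eq_rcons e (word_eq_rcons d wQ2)) _.
  have de : d = ordS e by apply: (ordS_of_mod he); rewrite Z.sub_add.
  by apply: word_eq_braid_rcons; rewrite /adjacent de eqxx.
- apply/ascending_rcons; split; first (apply/ascending_rcons; split => // x).
  + move=> hx; apply: (ascent_mod (p := p)); first by rewrite hx hd.
    by rewrite !c2 e1 e2 !c1 dm d1; lia.
  + move=> x hx; apply: (ascent_mod (p := p - 1)); first by rewrite hx he.
    by rewrite Z.sub_add !wact_rcons dm d0 !c2 e0 e2 !c1 d0 d1; lia.
- by rewrite !size_rcons -sQ1 -sQ2.
Qed.

Lemma ends_in_commute : p mod nZ <> zord e -> (p + 1) mod nZ <> zord e ->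
  (p - 1) mod nZ <> zord e -> ends_in (rcons w e) p.
Proof.
move=> h0 h1 h2; set d := zmod_ord p; have hd : p mod nZ = zord d by rewrite zord_zmod_ord.
have e0 : aref e p = p by apply: aref_fix.
have e1 : aref e (p + 1) = p + 1 by apply: aref_fix; rewrite ?Z.add_simpl_r.
have := desc; rewrite e0 e1 => dn.
have [Q1 wQ1 [aQ1 sQ1]] := IH (leqnn _) asc_w dn.
have c1 x : wact Q1 x = wact w (aref d x) := wact_word_eq_rcons x wQ1.
exists (rcons Q1 e); last split.
- apply: rst_trans (word_eq_rcons e wQ1) _; apply: word_eq_comm_rcons.
  + by apply/eqP => de; apply: h0; rewrite -de.
  + rewrite /adjacent negb_or; apply/andP; split; apply/eqP => E.
    * by apply: h1; rewrite E; exact: mod_ordS.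
    * by apply: h2; apply: mod_pred_ordS; rewrite -E.
- apply/ascending_rcons; split => // x hx /=; rewrite !c1 !(aref_fix (a := d)) -?hd.
  + exact: asc_e.
  + by rewrite -(Z.sub_add 1 p) => /mod_succ_inj; rewrite hx => /esym.
  + by rewrite Z.add_simpl_r hx => /esym.
  + by rewrite hx => /esym.
  + by move=> hx1; apply: h1; rewrite -hx -(Z.sub_add 1 x) !mod_succ hx1.
- by rewrite !size_rcons sQ1.
Qed.

End ExchangeStep.

Lemma ascending_descent_exchange w : descent_exchange w.
Proof.
move: {2}(size w) (leqnn (size w)) => m; elim: m w => [|m IHm] w.
  by rewrite leqn0 => /nilP -> _ p /=; lia.
case/lastP: w => [_ _ p /=|w e]; first lia.
rewrite size_rcons ltnS => hs /ascending_rcons [asc_w asc_e] p; rewrite !wact_rcons => desc.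
have IH w' : (size w' <= size w)%N -> descent_exchange w'.
  by move=> h; apply: IHm; exact: leq_trans hs.
case: (Z.eq_dec (p mod nZ) (zord e)) => [|h0]; first exact: ends_in_last.
case: (Z.eq_dec ((p + 1) mod nZ) (zord e)) => [|h1]; first exact: ends_in_braid_up.
case: (Z.eq_dec ((p - 1) mod nZ) (zord e)) => [|h2]; first exact: ends_in_braid_down.
exact: ends_in_commute.
Qed.

Lemma reduced_ascending w : reduced w -> ascending id w.
Proof.
elim/last_ind: w => [|w a IH] // rw; have asc_w := IH (reduced_rcons rw).
apply/ascending_rcons; split=> // x hx /=.
case: (Z.lt_total (wact w x) (wact w (x + 1))) => [//|[/wact_inj|desc]]; first lia.
have [Q wQ [_ sQ]] := ascending_descent_exchange asc_w desc.
rewrite (zmod_ord_zord hx) in wQ.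
have : (size (rcons w a) <= size Q)%N.
  by apply: rw; apply: rst_trans (word_eq_rcons a wQ) (word_eq_sq_rcons Q a).
by rewrite size_rcons -sQ => /ltnW; rewrite ltnn.
Qed.

Lemma reduced_cat_ascending v u : reduced (v ++ u) -> ascending (wact v) u.
Proof. by move/reduced_ascending/ascending_cat => []. Qed.

Lemma swp_ordS a : swp a (ordS a) = a.
Proof. by rewrite /swp eqxx; case: eqP. Qed.

Definition crossing w (i j : 'I_n) : Prop :=
  exists x y a, w = x ++ a :: y /\ wstate x a = i /\ wstate x (ordS a) = j.

(* Read from the cut, the crossings of v are those of rev v with the two wires
   of each crossing exchanged. *)
Lemma tri_crossing u v i j : tri u v i j -> crossing u i j \/ crossing (rev v) j i.
Proof.
case=> [|[x [y [a [Ev [Ei Ej]]]]]]; [by left|right].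
exists (rev y), (rev x), a; split; first by rewrite Ev rev_cat rev_cons cat_rcons.
by move: Ei Ej; rewrite rev_cons !wstate_rcons swp_ordS /swp eqxx.
Qed.

Definition level u v P : Z := wact v P - wact (rev u) P.

Lemma level_mod u v P Q : P mod nZ = Q mod nZ -> level u v P = level u v Q.
Proof. by move/eqmod_period => ->; rewrite /level !wact_period; lia. Qed.

Lemma level_rev u v P : level (rev v) (rev u) P = - level u v P.
Proof. by rewrite /level revK; lia. Qed.

Lemma crossing_inversion x a y : ascending id (x ++ a :: y) ->
  wact x (zord a) < wact x (zord a + 1) /\
  wact (rev (x ++ a :: y)) (wact x (zord a + 1)) < wact (rev (x ++ a :: y)) (wact x (zord a)).
Proof.
rewrite -cat_rcons => /ascending_cat [/ascending_rcons [_ asc_a] asc_y].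
have ha : zord a mod nZ = zord a by rewrite Z.mod_small //; exact: zord_range.
have [s0 s1] := aref_at ha; have lt := asc_a _ ha; split=> //.
rewrite rev_cat rev_rcons !wact_cat /= !wact_revK s0 s1.
by apply: (ascending_rev_lt asc_y); rewrite /= ?wact_rcons ?s0 ?s1; lia.
Qed.

Lemma shift_into_period f I J : (forall P k, f (P + k * nZ) = f P + k * nZ) ->
  I < J -> f J < f I -> exists2 J', J' mod nZ = J mod nZ & I < J' < I + nZ /\ f J' < f I.
Proof.
move=> fper IJ fJI; have := nZ_ge3 => nz.
set k := (J - I) / nZ; set r := (J - I) mod nZ.
have Er : J - I = nZ * k + r := Z.div_mod _ _ nZ_neq0.
have Hr : 0 <= r < nZ := mod_range _.
have Hk : 0 <= k by apply: Z.div_pos; lia.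
have r0 : r <> 0.
  move=> r0; have EJ : J = I + k * nZ by lia.
  by move: fJI; rewrite EJ fper; nia.
exists (J + (- k) * nZ); first exact: mod_add_period.
by rewrite fper; split; nia.
Qed.

Lemma mod_translation_le f x y :
  mod_translation f -> f x < f y -> y < x + nZ -> f x - x <= f y - y.
Proof.
case=> K hK fxy yx; have [s hs] := hK x; have [t ht] := hK y.
by apply: le_of_eqmod; [rewrite hs ht !mod_add_period|lia].
Qed.

Lemma crossing_level_lt u v i j :
  ascending id u -> ascending (wact v) u -> mod_translation (wact v) ->
  crossing u i j -> level u v (zord i) < level u v (zord j).
Proof.
move=> asc_u asc_vu tv [x [y [a [Eu [Ei Ej]]]]].
have ha : zord a mod nZ = zord a by rewrite Z.mod_small //; exact: zord_range.
set I := wact x (zord a); set J := wact x (zord a + 1).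
have -> : level u v (zord i) = level u v I.
  by apply: level_mod; rewrite -Ei (zord_wstate _ ha) Z.mod_mod //; exact: nZ_neq0.
have -> : level u v (zord j) = level u v J.
  by apply: level_mod; rewrite -Ej (zord_wstate _ (mod_ordS ha)) Z.mod_mod //; exact: nZ_neq0.
have := crossing_inversion (x := x) (a := a) (y := y); rewrite -Eu -/I -/J => /(_ asc_u) [IJ FJI].
have [J' /level_mod <- [[IJ' J'I] FJ'I]] := shift_into_period (wact_period (rev u)) IJ FJI.
have vIJ' : wact v I < wact v J'.
  case: (Z.lt_total (wact v I) (wact v J')) => [//|[/wact_inj|vJ'I]]; first lia.
  by have := ascending_rev_lt asc_vu IJ' vJ'I; lia.
by have := mod_translation_le tv vIJ' J'I; rewrite /level; lia.
Qed.

End AffinePermutations.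

Theorem lemma4p3 (n : nat) (Hn : 3 <= n) (u v : seq 'I_n) :
  reduced u -> is_glide u ->
  reduced v -> is_glide v ->
  reduced (v ++ u) ->
  exists alpha : 'I_n -> R,
    forall i j : 'I_n, tri u v i j -> Rlt (alpha i) (alpha j).
Proof.
move=> ru gu rv gv rvu.
have asc_vu := reduced_cat_ascending Hn rvu.
have asc_uv : ascending (wact (rev u)) (rev v).
  by apply: (reduced_cat_ascending Hn); rewrite -rev_cat; exact: reduced_rev.
have tv := glide_mod_translation Hn gv.
have tu := mod_translation_rev Hn (glide_mod_translation Hn gu).
exists (fun i => IZR (level u v (zord i))) => i j /tri_crossing [cu|cv]; apply: IZR_lt.
- exact (crossing_level_lt Hn (reduced_ascending Hn ru) asc_vu tv cu).
- have := crossing_level_lt Hn (reduced_ascending Hn (reduced_rev rv)) asc_uv tu cv.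
  by rewrite !level_rev -Z.opp_lt_mono.
Qed.
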